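(* Let $\alpha: I\to M$ be a unit-speed curve on an oriented surface $M\subset E^3$ with Darboux frame $\{T,V,U\}$ and curvatures $k_g,k_n,\tau_g$. Consider the curve $\gamma$ defined in either of the following two cases: (a) $\tau_g\equiv0$, $k_n$ and $k_g$ nowhere zero, and $\gamma(s)=\alpha(s)+\frac{1}{k_g(s)}V(s)$; (b) $\tau_g$ nowhere zero, $\omega$ an antiderivative of $k_nk_g/\tau_g$, $\Omega$ an antiderivative of $e^{\omega}$, $c_8$ a real constant, $y_1=e^{-\omega}(c_8-\Omega)$, $y_2=-\frac{k_n}{\tau_g}y_1$, and $\gamma(s)=\alpha(s)+y_1(s)T(s)+y_2(s)V(s)$. In either case assume $\gamma$ is regular. Then $\gamma$ is a general helix if and only if $\alpha$ is a relatively normal-slant helix on $M$.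
   Context: $M$ is an oriented surface in Euclidean 3-space $E^3$ and $\alpha:I\to M$ is a unit-speed curve with arc-length parameter $s$. Its Darboux frame $\{T,V,U\}$ consists of the unit tangent $T=\alpha'$, the unit surface normal $U$ of $M$ along $\alpha$, and $V=U\times T$; it satisfies $T'=k_gV+k_nU$, $V'=-k_gT+\tau_gU$, $U'=-k_nT-\tau_gV$, where $k_g,k_n,\tau_g$ are the geodesic curvature, normal curvature and geodesic torsion. A regular curve is a general helix if its unit tangent makes a constant angle with a fixed direction. $\alpha$ is a relatively normal-slant helix if $\langle V,d\rangle$ is constant for some fixed unit vector $d$. *)

From HB Require Import structures.
From mathcomp Require Import all_boot all_order all_algebra.
From mathcomp Require Import all_classical all_reals all_analysis.
Set Implicit Arguments. Unset Strict Implicit. Unset Printing Implicit Defensive.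
Import Order.TTheory GRing.Theory Num.Theory.
Import numFieldNormedType.Exports.
Local Open Scope classical_set_scope.
Local Open Scope ring_scope.

Section E3.
Variable R : realType.

Definition dot3 (u v : 'rV[R]_3) : R := \sum_(i < 3) u 0 i * v 0 i.

Definition len3 (u : 'rV[R]_3) : R := Num.sqrt (dot3 u u).

Definition cross3 (u v : 'rV[R]_3) : 'rV[R]_3 :=
  \row_(k < 3)
    (if k == 0 :> nat then u 0 1 * v 0 2%:R - u 0 2%:R * v 0 1
     else if k == 1 :> nat then u 0 2%:R * v 0 0 - u 0 0 * v 0 2%:R
     else u 0 0 * v 0 1 - u 0 1 * v 0 0).

Definition darboux_frame (I : set R) (alpha T V U : R -> 'rV[R]_3)
  (kg kn tg : R -> R) : Prop :=
  forall s, I s ->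
    [/\ is_derive s 1 alpha (T s),
        dot3 (T s) (T s) = 1,
        dot3 (U s) (U s) = 1,
        dot3 (T s) (U s) = 0 &
        V s = cross3 (U s) (T s)] /\
    [/\ is_derive s 1 T (kg s *: V s + kn s *: U s),
        is_derive s 1 V (- kg s *: T s + tg s *: U s) &
        is_derive s 1 U (- kn s *: T s - tg s *: V s)].

Definition regular_on (I : set R) (gamma : R -> 'rV[R]_3) : Prop :=
  forall s, I s -> derivable gamma s 1 /\ 'D_1 gamma s != 0.

Definition general_helix (I : set R) (gamma : R -> 'rV[R]_3) : Prop :=
  exists (d : 'rV[R]_3) (c : R), dot3 d d = 1 /\
    forall s, I s -> dot3 ((len3 ('D_1 gamma s))^-1 *: 'D_1 gamma s) d = c.

Definition rel_normal_slant_helix (I : set R) (V : R -> 'rV[R]_3) : Prop :=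
  exists (d : 'rV[R]_3) (c : R), dot3 d d = 1 /\
    forall s, I s -> dot3 (V s) d = c.

End E3.

From HB Require Import structures.
From mathcomp Require Import all_boot all_order all_algebra.
From mathcomp Require Import all_classical all_reals all_analysis.
From mathcomp Require Import ring.
Import Order.TTheory GRing.Theory Num.Theory.
Import numFieldNormedType.Exports.
Local Open Scope classical_set_scope.
Local Open Scope ring_scope.

(* In both cases the Darboux equations kill the T- and U-components of gamma':
   in case (a) because tg = 0 and kg (1/kg) = 1, in case (b) because
   tg y2 = - kn y1 and y1 solves y1' = - (kn kg / tg) y1 - 1.  Hence gamma' = f V with f nowhere zero by
   regularity, and the unit tangent of gamma is sg(f) V.
   If <sg(f) V, d> = c <> 0, then <V, d> never vanishes and <V, d>^2 = c^2, so
   differentiating shows that <V, d> is constant.  Conversely, if <V, d> = c <> 0,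
   then <gamma, d>' = f c has no zero on the interval I; a derivative without
   zeros on an interval keeps its sign (the function is injective, hence
   monotone), so sg(f) and with it the angle between gamma' and d are constant. *)

Section vector_derivatives.
Context {R : realType} {V : normedModType R}.

Lemma is_derive_val {W : normedModType R} {f : V -> W} {x v : V} {df : W} :
  is_derive x v f df -> 'D_v f x = df.
Proof. by case. Qed.

Lemma is_derive_unique {W : normedModType R} {f : V -> W} {x v : V} {df1 df2 : W} :
  is_derive x v f df1 -> is_derive x v f df2 -> df1 = df2.
Proof. by move=> d1 d2; rewrite -(is_derive_val d1) (is_derive_val d2). Qed.

Lemma is_derive_eq_on {W : normedModType R} {I : set V} {f g : V -> W} {x v : V} {df : W} :
  open I -> I x -> (forall t, I t -> f t = g t) ->
  is_derive x v f df -> is_derive x v g df.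
Proof.
move=> oI Ix fg; apply: near_eq_is_derive.
have nI : nbhs x I by exact: open_nbhs_nbhs.
exact: filterS fg nI.
Qed.

Lemma is_derive_mxP {m n : nat} (M : V -> 'M[R]_(m, n)) x v (dM : 'M[R]_(m, n)) :
  is_derive x v M dM <-> forall i j, is_derive x v (fun t => M t i j) (dM i j).
Proof.
split=> [dM_ i j | dMij].
- have dMx : derivable M x v by case: dM_.
  apply: DeriveDef; first exact: (derivable_mxP M x v).1 dMx i j.
  by rewrite -(is_derive_val dM_) derive_mx // mxE.
- have dMx : derivable M x v by apply/derivable_mxP => i j; case: (dMij i j).
  apply: DeriveDef => //; apply/matrixP => i j.
  by rewrite derive_mx // mxE (is_derive_val (dMij i j)).
Qed.

Lemma is_deriveZ_mx {m n : nat} {a : V -> R} {M : V -> 'M[R]_(m, n)} {x v : V} {da : R}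
  {dM : 'M[R]_(m, n)} :
  is_derive x v a da -> is_derive x v M dM ->
  is_derive x v (fun t => a t *: M t) (a x *: dM + da *: M x).
Proof.
move=> da_ /is_derive_mxP dM_; apply/is_derive_mxP => i j.
have -> : (fun t => (a t *: M t) i j) = a * (fun t => M t i j).
  by apply/funext => t; rewrite mxE.
by apply: is_derive_eq (is_deriveM da_ (dM_ i j)) _; rewrite !mxE [M x i j *: _]mulrC.
Qed.

Lemma is_derive_dot3l {F : V -> 'rV[R]_3} (d : 'rV[R]_3) {x v : V} {dF : 'rV[R]_3} :
  is_derive x v F dF -> is_derive x v (fun t => dot3 (F t) d) (dot3 dF d).
Proof.
move=> /is_derive_mxP dF_.
have -> : (fun t => dot3 (F t) d) = \sum_(i < 3) ((fun t => F t 0 i) * cst (d 0 i)).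
  by rewrite fct_sumE.
apply: is_derive_eq (is_derive_sum (fun i => is_deriveM (dF_ 0 i) (is_derive_cst _ _ _))) _.
by apply: eq_bigr => i _; rewrite scaler0 add0r mulrC.
Qed.

End vector_derivatives.

Section real_derivatives.
Context {R : realType}.

Lemma is_interval_itv (I : set R) (a b x : R) :
  is_interval I -> I a -> I b -> x \in `[a, b] -> I x.
Proof. by move=> iI Ia Ib xab; apply: (iI a b) => //; rewrite !(itvP xab). Qed.

Lemma is_derive0_cst_on {I : set R} {g : R -> R} :
  is_interval I -> (forall s, I s -> is_derive s 1 g 0) ->
  forall a b, I a -> I b -> g a = g b.
Proof.
move=> iI dg0 a b.
wlog ab : a b / a <= b.
  by move=> W Ia Ib; case: (leP a b) => [/W|/ltW/W]; [apply | move=> /(_ Ib Ia)].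
move=> Ia Ib; have inI x := @is_interval_itv I a b x iI Ia Ib.
have gC : {within `[a, b], continuous g}.
  by apply: derivable_within_continuous => x /inI /dg0 [].
have [c _] := MVT_segment ab (fun x xab => dg0 x (inI x (subset_itv_oo_cc xab))) gC.
by rewrite mul0r => /eqP; rewrite subr_eq0 => /eqP.
Qed.

Lemma is_derive_sqr_cst_on {I : set R} {g dg : R -> R} {k : R} :
  open I -> is_interval I -> (forall s, I s -> is_derive s 1 g (dg s)) ->
  (forall s, I s -> g s != 0) -> (forall s, I s -> g s ^+ 2 = k) ->
  forall a b, I a -> I b -> g a = g b.
Proof.
move=> oI iI dg_ g0 gk; apply: is_derive0_cst_on => // s Is.
have dsq := is_deriveM (dg_ s Is) (dg_ s Is).
have dsq0 : is_derive s 1 (g * g) 0.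
  by apply: (is_derive_eq_on (f := cst k) oI Is) => t It; rewrite -(gk t It).
move/eqP: (is_derive_unique dsq dsq0); rewrite -mulr2n mulrn_eq0 /GRing.scale /=.
rewrite mulf_eq0 (negbTE (g0 s Is)) => /eqP dgs0.
exact: is_derive_eq (dg_ s Is) dgs0.
Qed.

Lemma is_derive_neq0_inj {I : set R} {g dg : R -> R} :
  is_interval I -> (forall s, I s -> is_derive s 1 g (dg s)) ->
  (forall s, I s -> dg s != 0) -> forall x y, I x -> I y -> g x = g y -> x = y.
Proof.
move=> iI dg_ dg0 x y.
wlog xy : x y / x <= y.
  move=> W Ix Iy gxy; case: (leP x y) => [/W|/ltW/W]; first exact.
  by move=> /(_ Iy Ix (esym gxy)).
move=> Ix Iy gxy; move: xy; rewrite le_eqVlt => /orP[/eqP //|lt_xy].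
have inI z := @is_interval_itv I x y z iI Ix Iy.
have gC : {within `[x, y], continuous g}.
  by apply: derivable_within_continuous => z /inI /dg_ [].
have gD z : z \in `]x, y[ -> derivable g z 1.
  by move=> /subset_itv_oo_cc /inI /dg_ [].
have [c /subset_itv_oo_cc /inI Ic dgc] := Rolle lt_xy gD gC gxy.
by have := dg0 c Ic; rewrite (is_derive_unique (dg_ c Ic) dgc) eqxx.
Qed.

Lemma is_derive_neq0_sgr {I : set R} {g dg : R -> R} :
  open I -> is_interval I -> (forall s, I s -> is_derive s 1 g (dg s)) ->
  (forall s, I s -> dg s != 0) ->
  forall x y, I x -> I y -> Num.sg (dg x) = Num.sg (dg y).
Proof.
move=> oI iI dg_ dg0.
have IE x : I x <-> x \in Rhull I by rewrite {1}((is_intervalP I).1 iI).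
have gC : {within [set` Rhull I], continuous g}.
  by apply: derivable_within_continuous => z /IE /dg_ [].
have ginj : {in Rhull I &, injective g}.
  by move=> x y /IE Ix /IE Iy; apply: is_derive_neq0_inj dg_ dg0 x y Ix Iy.
have dI : {in I° : set R, forall x, derivable g x 1}.
  by move=> x; rewrite inE (interior_id I).1 // => /dg_ [].
have dgE x : I x -> derive1 g x = dg x.
  by move=> Ix; rewrite derive1E (is_derive_val (dg_ x Ix)).
have Iint x : I x -> I° x by rewrite (interior_id I).1.
suff [dg_gt0|dg_lt0] : (forall x, I x -> 0 < dg x) \/ (forall x, I x -> dg x < 0).
- by move=> x y Ix Iy; rewrite !gtr0_sg ?dg_gt0.
- by move=> x y Ix Iy; rewrite !ltr0_sg ?dg_lt0.
have [incr|decr] := itv_continuous_inj_mono gC ginj; [left|right] => x Ix.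
- rewrite lt_def dg0 // -dgE //; apply: incr_derive1_ge0 dI _ (Iint x Ix).
  by move=> u v /[!inE] /IE Iu /IE Iv; apply: incr.
- rewrite lt_def eq_sym dg0 // -dgE //; apply: decr_derive1_le0 dI _ (Iint x Ix).
  by move=> u v /[!inE] /IE Iu /IE Iv; apply: decr.
Qed.

End real_derivatives.

Section dot3.
Context {R : realType}.
Implicit Types (u v : 'rV[R]_3) (a : R).

Lemma dot3E u v : dot3 u v = u 0 0 * v 0 0 + u 0 1 * v 0 1 + u 0 2%:R * v 0 2%:R.
Proof.
rewrite /dot3 !big_ord_recr big_ord0 /= add0r.
by congr (_ * _ + _ * _ + _ * _); congr (_ _ _); apply/val_inj.
Qed.

Lemma dot3C u v : dot3 u v = dot3 v u.
Proof. by apply: eq_bigr => i _; rewrite mulrC. Qed.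

Lemma dot3Zl a u v : dot3 (a *: u) v = a * dot3 u v.
Proof. by rewrite /dot3 mulr_sumr; apply: eq_bigr => i _; rewrite mxE mulrA. Qed.

Lemma dot3_cross3 u v :
  dot3 (cross3 u v) (cross3 u v) = dot3 u u * dot3 v v - dot3 u v ^+ 2.
Proof. by rewrite !dot3E /cross3 !mxE /=; ring. Qed.

Lemma len3Z a u : dot3 u u = 1 -> len3 (a *: u) = `|a|.
Proof. by move=> uu; rewrite /len3 dot3Zl dot3C dot3Zl uu mulr1 -expr2 sqrtr_sqr. Qed.

Lemma unit_tangentZ a u : dot3 u u = 1 -> (len3 (a *: u))^-1 *: (a *: u) = Num.sg a *: u.
Proof.
move=> uu; rewrite len3Z // scalerA; congr (_ *: _).
have [->|a0] := eqVneq a 0; first by rewrite sgr0 mulr0.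
by rewrite {2}(numEsg a) mulrCA mulVf ?mulr1 ?normr_eq0.
Qed.

End dot3.

Section helix_along_unit_field.
Context {R : realType} {I : set R} {gamma N : R -> 'rV[R]_3} {f : R -> R}.
Hypotheses (oI : open I) (iI : is_interval I) (I0 : I !=set0).
Hypothesis dgamma : forall s, I s -> is_derive s 1 gamma (f s *: N s).
Hypothesis f_neq0 : forall s, I s -> f s != 0.
Hypothesis N_unit : forall s, I s -> dot3 (N s) (N s) = 1.
Hypothesis dN : forall s, I s -> derivable N s 1.

Lemma unit_tangent_dot3 d s : I s ->
  dot3 ((len3 ('D_1 gamma s))^-1 *: 'D_1 gamma s) d = Num.sg (f s) * dot3 (N s) d.
Proof.
move=> Is; rewrite (is_derive_val (dgamma s Is)).
by rewrite unit_tangentZ ?N_unit // dot3Zl.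
Qed.

Lemma general_helix_rel_normal_slant : general_helix I gamma -> rel_normal_slant_helix I N.
Proof.
move=> [d [c [dd tgd]]]; exists d.
have sgNd s : I s -> Num.sg (f s) * dot3 (N s) d = c.
  by move=> Is; rewrite -unit_tangent_dot3 // tgd.
have [c0|c0] := eqVneq c 0.
  exists 0; split=> // s Is; apply/eqP; move/eqP: (sgNd s Is).
  by rewrite c0 mulf_eq0 sgr_eq0 (negbTE (f_neq0 s Is)).
have [s0 Is0] := I0; exists (dot3 (N s0) d); split=> // s Is.
apply: (@is_derive_sqr_cst_on _ I (fun t => dot3 (N t) d)
  (fun t => dot3 ('D_1 N t) d) (c ^+ 2)) => // t It.
- exact/is_derive_dot3l/derivableP/dN.
- by apply: contra_neq c0 => Nd0; rewrite -(sgNd t It) Nd0 mulr0.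
- by rewrite -(sgNd t It) exprMn sqr_sg f_neq0 // mul1r.
Qed.

Lemma rel_normal_slant_general_helix : rel_normal_slant_helix I N -> general_helix I gamma.
Proof.
move=> [d [c [dd Nd]]]; exists d.
have [c0|c0] := eqVneq c 0.
  by exists 0; split=> // s Is; rewrite unit_tangent_dot3 // Nd // c0 mulr0.
have dgd s : I s -> is_derive s 1 (fun t => dot3 (gamma t) d) (f s * c).
  move=> Is; apply: is_derive_eq (is_derive_dot3l d (dgamma s Is)) _.
  by rewrite dot3Zl Nd.
have fc0 s : I s -> f s * c != 0 by move=> Is; rewrite mulf_neq0 ?f_neq0.
have [s0 Is0] := I0; exists (Num.sg (f s0 * c) * `|c|); split=> // s Is.
rewrite unit_tangent_dot3 // Nd // (is_derive_neq0_sgr oI iI dgd fc0 s0 s Is0 Is).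
by rewrite sgrM -mulrA -numEsg.
Qed.

Lemma general_helix_iff_rel_normal_slant :
  general_helix I gamma <-> rel_normal_slant_helix I N.
Proof.
by split; [exact: general_helix_rel_normal_slant | exact: rel_normal_slant_general_helix].
Qed.

End helix_along_unit_field.

Lemma is_derive_expRN_mul {R : realType} {omega Omega : R -> R} {w : R} (c : R) {s : R} :
  is_derive s 1 omega w -> is_derive s 1 Omega (expR (omega s)) ->
  is_derive s 1 (fun t => expR (- omega t) * (c - Omega t))
    (- w * (expR (- omega s) * (c - Omega s)) - 1).
Proof.
move=> domega dOmega.
have dexp : is_derive s 1 (fun t => expR (- omega t)) (expR (- omega s) * - w).
  exact: is_derive1_comp (is_derive_expR _) (is_deriveN domega).
have dc : is_derive s 1 (fun t => c - Omega t) (0 - expR (omega s)).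
  exact: is_deriveB (is_derive_cst c s 1) dOmega.
apply: is_derive_eq (is_deriveM dexp dc) _.
rewrite /GRing.scale /= expRN sub0r mulrN mulVf ?expR_eq0 //; ring.
Qed.

Section darboux_frame.
Context {R : realType} {I : set R} {alpha T V U : R -> 'rV[R]_3} {kg kn tg : R -> R}.
Hypotheses (oI : open I) (frame : darboux_frame I alpha T V U kg kn tg).

Lemma darboux_frame_unitV s : I s -> dot3 (V s) (V s) = 1.
Proof.
move=> Is; have [[_ TT UU TU ->] _] := frame s Is.
by rewrite dot3_cross3 UU TT (dot3C (U s)) TU expr0n /= subr0 mulr1.
Qed.

Lemma darboux_frame_derivableV s : I s -> derivable V s 1.
Proof. by move=> Is; have [_ [_ dV _]] := frame s Is; case: dV. Qed.

Lemma is_derive_darboux_comb {y1 y2 : R -> R} {s dy1 dy2 : R} : I s ->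
  is_derive s 1 y1 dy1 -> is_derive s 1 y2 dy2 ->
  is_derive s 1 (fun t => alpha t + y1 t *: T t + y2 t *: V t)
    ((1 + dy1 - kg s * y2 s) *: T s + (kg s * y1 s + dy2) *: V s
     + (kn s * y1 s + tg s * y2 s) *: U s).
Proof.
move=> Is dy1_ dy2_; have [[dalpha _ _ _ _] [dT dV _]] := frame s Is.
apply: is_derive_eq
  (is_deriveD (is_deriveD dalpha (is_deriveZ_mx dy1_ dT)) (is_deriveZ_mx dy2_ dV)) _.
by apply/rowP => i; rewrite !mxE; ring.
Qed.

Lemma geodesic_torsion0_is_derive {gamma : R -> 'rV[R]_3} {s : R} :
  (forall t, I t -> gamma t = alpha t + (kg t)^-1 *: V t) ->
  I s -> tg s = 0 -> kg s != 0 -> derivable kg s 1 ->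
  is_derive s 1 gamma ('D_1 (fun t => (kg t)^-1) s *: V s).
Proof.
move=> gammaE Is tg0 kg0 dkg.
have dinv : derivable (fun t => (kg t)^-1) s 1 by exact: derivableV.
have := is_derive_darboux_comb Is (is_derive_cst 0 s 1) (derivableP dinv).
rewrite /= tg0 mulfV // mul0r !mulr0 addr0 subrr !add0r !scale0r add0r addr0.
move=> dcomb; apply: (is_derive_eq_on oI Is _ dcomb) => t It.
by rewrite gammaE // scale0r addr0.
Qed.

Lemma geodesic_torsion_neq0_is_derive {gamma : R -> 'rV[R]_3} {y1 : R -> R} {s : R} :
  (forall t, I t -> gamma t = alpha t + y1 t *: T t + (- (kn t / tg t) * y1 t) *: V t) ->
  I s -> tg s != 0 -> derivable kn s 1 -> derivable tg s 1 ->
  is_derive s 1 y1 (- (kn s * kg s / tg s) * y1 s - 1) ->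
  is_derive s 1 gamma ((kg s * y1 s + 'D_1 (fun t => - (kn t / tg t) * y1 t) s) *: V s).
Proof.
move=> gammaE Is tg0 dkn dtg dy1.
have dy2 : derivable (fun t => - (kn t / tg t) * y1 t) s 1.
  apply: (@derivableM _ _ (fun t => - (kn t / tg t)) y1); last by case: dy1.
  by apply: derivableN; apply: derivableM => //; exact: derivableV.
have := is_derive_darboux_comb Is dy1 (derivableP dy2).
have -> : 1 + (- (kn s * kg s / tg s) * y1 s - 1) - kg s * (- (kn s / tg s) * y1 s) = 0.
  by ring.
have -> : kn s * y1 s + tg s * (- (kn s / tg s) * y1 s) = 0 by field.
rewrite !scale0r add0r addr0.
move=> dcomb; apply: (is_derive_eq_on oI Is _ dcomb) => t It.
by rewrite gammaE.
Qed.

End darboux_frame.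

Lemma regular_on_is_deriveZ_neq0 {R : realType} (I : set R) (gamma : R -> 'rV[R]_3)
  s a (u : 'rV[R]_3) :
  regular_on I gamma -> I s -> is_derive s 1 gamma (a *: u) -> a != 0.
Proof.
move=> reg Is dgamma; have [_] := reg s Is.
by rewrite (is_derive_val dgamma); apply: contraNneq => ->; rewrite scale0r.
Qed.

Theorem theorem3p19 (R : realType) (I : set R)
  (alpha T V U : R -> 'rV[R]_3) (kg kn tg : R -> R) (gamma : R -> 'rV[R]_3) :
  open I -> is_interval I -> I !=set0 ->
  darboux_frame I alpha T V U kg kn tg ->
  (forall s, I s -> [/\ derivable kg s 1, derivable kn s 1 & derivable tg s 1]) ->
  ( (* case (a) *)
    ((forall s, I s -> [/\ tg s = 0, kn s != 0 & kg s != 0]) /\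
     (forall s, I s -> gamma s = alpha s + (kg s)^-1 *: V s))
  \/
    (* case (b) *)
    ((forall s, I s -> tg s != 0) /\
     exists (omega Omega : R -> R) (c8 : R),
       (forall s, I s -> is_derive s 1 omega (kn s * kg s / tg s)) /\
       (forall s, I s -> is_derive s 1 Omega (expR (omega s))) /\
       (forall s, I s ->
          let y1 := expR (- omega s) * (c8 - Omega s) in
          let y2 := - (kn s / tg s) * y1 in
          gamma s = alpha s + y1 *: T s + y2 *: V s)) ) ->
  regular_on I gamma ->
  (general_helix I gamma <-> rel_normal_slant_helix I V).
Proof.
move=> oI iI I0 frame dk cases reg.
have [f dgamma] : exists f : R -> R, forall s, I s -> is_derive s 1 gamma (f s *: V s).
  case: cases => [[curv gammaE]|[tg_neq0 [om [Om [c8 [dom [dOm gammaE]]]]]]].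
  - exists (fun s => 'D_1 (fun t => (kg t)^-1) s) => s Is /=.
    have [tg0 _ kg0] := curv s Is; have [dkg _ _] := dk s Is.
    apply: (geodesic_torsion0_is_derive oI frame gammaE Is tg0 kg0 dkg).
  - pose y1 t := expR (- om t) * (c8 - Om t).
    exists (fun s => kg s * y1 s + 'D_1 (fun t => - (kn t / tg t) * y1 t) s) => s Is /=.
    have [_ dkn dtg] := dk s Is.
    apply: (geodesic_torsion_neq0_is_derive oI frame gammaE Is (tg_neq0 s Is) dkn dtg).
    exact: is_derive_expRN_mul (dom s Is) (dOm s Is).
have f_neq0 s : I s -> f s != 0.
  by move=> Is; exact: regular_on_is_deriveZ_neq0 reg Is (dgamma s Is).
apply: general_helix_iff_rel_normal_slant oI iI I0 dgamma f_neq0 _ _ => s Is.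
- exact: darboux_frame_unitV frame s Is.
- exact: darboux_frame_derivableV frame s Is.
Qed.
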